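(* Let $\Lambda$ be a set with $2\leq|\Lambda|\leq\omega$, and for every $\lambda\in\Lambda$ let $\mathbf{H}(\lambda)$ be a $\pi$-tree on a topological space $X_\lambda$. Suppose that for every finite nonempty $I\subseteq\Lambda$: whenever $R_i\in\mathrm{Rise}_{\mathbf{H}(i)}(X_i)$ for all $i\in I$, the set $\bigcap_{i\in I}R_i$ is infinite. Then the Tychonoff product $\prod_{\lambda\in\Lambda}X_\lambda$ has a $\pi$-tree.
   Context: Neighbourhoods are not necessarily open. $\omega=\{0,1,2,\dots\}$, ${}^{<\omega}\omega$ is the set of finite sequences of natural numbers. A tree is a strict partial order in which the set of predecessors of every node is well-ordered; $\mathrm{height}(x)$ is the ordinal isomorphic to the set of predecessors of $x$; a branch is a maximal chain; $\mathrm{sons}(x)$ is the set of immediate successors of $x$; $0$ denotes the least node. A foliage tree is a pair $\mathbf{F}=(T,l)$ with $T$ a tree (skeleton) and $l$ a function on its nodes, $\mathbf{F}_x:=l(x)$ the leaf at $x$; tree notions apply via the skeleton. $\mathrm{shoot}_{\mathbf{F}}(v)=\{\bigcup_{x\in C}\mathbf{F}_x: C\text{ a cofinite subset of }\mathrm{sons}_{\mathbf{F}}(v)\}$; $\mathrm{scope}_{\mathbf{F}}(p)=\{x:p\in\mathbf{F}_x\}$. For families $\gamma,\delta$ of sets, $\gamma\gg\delta$ means every nonempty $D\in\delta$ contains some nonempty $G\in\gamma$. $\mathrm{rise}_{\mathbf{F}}(p,U)=\{\mathrm{height}_{\mathbf{F}}(v): v\in\mathrm{scope}_{\mathbf{F}}(p),\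 \mathrm{shoot}_{\mathbf{F}}(v)\gg\{U\}\}$; $\mathrm{Rise}_{\mathbf{F}}(X)=\{\mathrm{rise}_{\mathbf{F}}(p,U):p\in X,\ U\text{ a neighbourhood of }p\text{ in }X\}$. $\mathbf{F}$ is locally strict if each non-maximal leaf $\mathbf{F}_x$ is the disjoint union of the leaves $\mathbf{F}_s$, $s\in\mathrm{sons}(x)$; has strict branches if it has a node and for each branch $B$, $\bigcap_{x\in B}\mathbf{F}_x$ is a singleton; is open in $X$ if all leaves are open in $X$; is a foliage $\omega,\omega$-tree if its skeleton is order-isomorphic to $({}^{<\omega}\omega,\subsetneq)$. A Baire foliage tree on $X$ is an open in $X$, locally strict foliage $\omega,\omega$-tree with strict branches and $\mathbf{F}_{0_{\mathbf{F}}}=X$. $\mathbf{F}$ grows into $X$ if for every $p\in X$ and neighbourhood $U$ of $p$ there is $z\in\mathrm{scope}_{\mathbf{F}}(p)$ with $\mathrm{shoot}_{\mathbf{F}}(z)\gg\{U\}$. A $\pi$-tree on $X$ is a Baire foliage tree on $X$ that grows into $X$; a space has a $\pi$-tree if there is a $\pi$-tree on it. *)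

From HB Require Import structures.
From mathcomp Require Import all_boot all_order.
From mathcomp Require Import classical_sets boolp cardinality topology.
Set Implicit Arguments. Unset Strict Implicit. Unset Printing Implicit Defensive.
Local Open Scope classical_set_scope.

(* The skeleton ({}^{<omega} omega, proper-prefix order). A foliage
   omega,omega-tree on X is represented (up to skeleton isomorphism) by its
   leaf function on seq nat. *)
Definition foliage (X : Type) := seq nat -> set X.

Definition node_lt (s t : seq nat) : Prop := prefix s t /\ s <> t.

Definition sons (v : seq nat) : set (seq nat) := [set rcons v n | n in [set: nat]].

(* height(x) = order type of the predecessors of x (a natural number here) *)
Definition height (v : seq nat) : nat := size v.

Definition is_chain (B : set (seq nat)) : Prop :=
  forall s t, B s -> B t -> s = t \/ node_lt s t \/ node_lt t s.
Definition is_branch (B : set (seq nat)) : Prop :=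
  is_chain B /\ forall C, is_chain C -> B `<=` C -> C = B.

Definition gg (T : Type) (gamma delta : set (set T)) : Prop :=
  forall D, delta D -> D <> set0 -> exists2 G, gamma G & G <> set0 /\ G `<=` D.

Definition shoot (X : Type) (F : foliage X) (v : seq nat) : set (set X) :=
  [set \bigcup_(x in C) F x | C in
     [set C : set (seq nat) | C `<=` sons v /\ finite_set (sons v `\` C)]].

Definition scope (X : Type) (F : foliage X) (p : X) : set (seq nat) :=
  [set x | F x p].

Definition rise (X : Type) (F : foliage X) (p : X) (U : set X) : set nat :=
  [set height v | v in [set v | scope F p v /\ gg (shoot F v) [set U]]].

Definition Rise (X : topologicalType) (F : foliage X) : set (set nat) :=
  [set R | exists p : X, exists2 U, nbhs p U & R = rise F p U].

Definition locally_strict (X : Type) (F : foliage X) : Prop :=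
  (* every node of the skeleton is non-maximal *)
  forall x, F x = \bigcup_(s in sons x) F s /\
            (forall s t, sons x s -> sons x t -> s <> t -> F s `&` F t = set0).

Definition strict_branches (X : Type) (F : foliage X) : Prop :=
  forall B, is_branch B -> exists p : X, \bigcap_(x in B) F x = [set p].

Definition open_foliage (X : topologicalType) (F : foliage X) : Prop :=
  forall x, open (F x).

Definition Baire_foliage_tree (X : topologicalType) (F : foliage X) : Prop :=
  open_foliage F /\ locally_strict F /\ strict_branches F /\ F [::] = setT.

Definition grows_into (X : topologicalType) (F : foliage X) : Prop :=
  forall (p : X) U, nbhs p U -> exists2 z, scope F p z & gg (shoot F z) [set U].

Definition pi_tree (X : topologicalType) (F : foliage X) : Prop :=
  Baire_foliage_tree F /\ grows_into F.

Definition has_pi_tree (X : topologicalType) : Prop :=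
  exists F : foliage X, pi_tree F.

(* Following the leaves through a point of a Baire foliage tree identifies X_l
   with nat -> nat ([address]), so a point x of the product becomes the array
   w j k = address (x l) k, where l is the coordinate of rank j.  The array is
   flattened into one sequence [product_code x] by listing, stage after stage,
   the finitely many entries with max j k = n, each stage encoded so that its
   first term is the minimum of the stage.  The leaves of the new tree are the
   sets of points whose sequence starts with a given word; such a word depends
   on finitely many coordinates up to a finite depth, so leaves are open.  For
   growth at p inside a box over finitely many coordinates J, take a level n
   above the ranks of J lying in the rises of all coordinates of J (their
   intersection is infinite).  At the node where stage n begins, a son with a
   large first digit makes every address of depth n large, which puts each
   coordinate l of J into a late son of the depth-n node of p l, and late sons
   of that node lie in the box. *)

From mathcomp Require Import all_boot all_order.
From mathcomp Require Import mathcomp_extra classical_sets boolp cardinality topology.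
From mathcomp Require Import zify.
Set Implicit Arguments. Unset Strict Implicit. Unset Printing Implicit Defensive.
Local Open Scope classical_set_scope.

(** * Min-first encoding of sequences *)

(* (a, b) |-> (minn a b, min_pair_code a b) is a bijection of nat * nat: the
   code records which argument is the minimum and its gap to the other one. *)
Definition min_pair_code (a b : nat) : nat :=
  if a <= b then 2 * (b - a) else 2 * (a - b - 1) + 1.

Definition min_pair_decode (m c : nat) : nat * nat :=
  if c %% 2 == 0 then (m, m + c %/ 2) else (m + c %/ 2 + 1, m).

Lemma min_pair_codeK a b : min_pair_decode (minn a b) (min_pair_code a b) = (a, b).
Proof.
rewrite /min_pair_decode /min_pair_code; case: leqP => ab.
  by rewrite ifT; [congr pair|apply/eqP]; lia.
by rewrite ifF; [congr pair|apply/negbTE/eqP]; lia.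
Qed.

Lemma min_pair_decodeK m c :
  let: (a, b) := min_pair_decode m c in minn a b = m /\ min_pair_code a b = c.
Proof.
rewrite /min_pair_decode /min_pair_code; case: eqP => c2.
  by rewrite ifT; first split; lia.
by rewrite ifF; first split; lia.
Qed.

Fixpoint min_encode_cons (a : nat) (l : seq nat) : nat * seq nat :=
  if l is b :: l' then
    let: (m, r) := min_encode_cons b l' in (minn a m, min_pair_code a m :: r)
  else (a, [::]).

Fixpoint min_decode_cons (m : nat) (r : seq nat) : seq nat :=
  if r is c :: r' then
    let: (a, b) := min_pair_decode m c in a :: min_decode_cons b r'
  else [:: m].

Definition min_encode (l : seq nat) : seq nat :=
  if l is a :: l' then let: (m, r) := min_encode_cons a l' in m :: r else [::].

Definition min_decode (l : seq nat) : seq nat :=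
  if l is m :: r then min_decode_cons m r else [::].

Lemma min_encode_consK a l :
  let: (m, r) := min_encode_cons a l in min_decode_cons m r = a :: l.
Proof.
elim: l a => [|b l IH] a //=; move: (IH b).
by case: min_encode_cons => m r /= <-; rewrite min_pair_codeK.
Qed.

Lemma min_decode_consK m r :
  exists a l, min_decode_cons m r = a :: l /\ min_encode_cons a l = (m, r).
Proof.
elim: r m => [|c r IH] m /=; first by exists m, [::].
move: (min_pair_decodeK m c); case: min_pair_decode => a b [<- <-].
have [a' [l [-> e]]] := IH b; exists a, (a' :: l); by rewrite /= e.
Qed.

Lemma min_encodeK : cancel min_encode min_decode.
Proof.
by case=> //= a l; move: (min_encode_consK a l); case: min_encode_cons.
Qed.

Lemma min_decodeK : cancel min_decode min_encode.
Proof. by case=> //= m r; have [a [l [-> /= ->]]] := min_decode_consK m r. Qed.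

Lemma size_min_encode l : size (min_encode l) = size l.
Proof.
case: l => //= a l; elim: l a => [|b l IH] a //=; move: (IH b).
by case: min_encode_cons => m r /= [->].
Qed.

Lemma head_min_encode l x : x \in l -> head 0 (min_encode l) <= x.
Proof.
case: l => //= a l; elim: l a => [|b l IH] a /=; first by rewrite inE => /eqP ->.
move: (IH b); case: min_encode_cons => m r /= hm.
rewrite in_cons => /predU1P [->|/hm]; [exact: geq_minl|exact/leq_trans/geq_minr].
Qed.

Lemma size_min_decode l : size (min_decode l) = size l.
Proof. by rewrite -{2}(min_decodeK l) size_min_encode. Qed.

Lemma prefix_nth (T : eqType) (x0 : T) s t i :
  prefix s t -> i < size s -> nth x0 s i = nth x0 t i.
Proof. by rewrite prefixE => /eqP {2}<- hi; rewrite nth_take. Qed.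

Lemma map_nth_index (T : eqType) (U : Type) (x0 : U) (s : seq T) (l : seq U) :
  uniq s -> size l = size s -> [seq nth x0 l (index q s) | q <- s] = l.
Proof.
case: s => [|q0 s] us hs; first by case: l hs.
apply: (@eq_from_nth _ x0); rewrite size_map // => i hi.
by rewrite (nth_map q0) // index_uniq // -hs.
Qed.

(** * Flattening an array in stages *)

Section Interleaving.
Variable rows : pred nat.

Definition block n : seq (nat * nat) :=
  [seq q <- [seq (j, k) | j <- iota 0 n.+1, k <- iota 0 n.+1]
     | rows q.1 && (maxn q.1 q.2 == n)].

Lemma mem_block n j k : ((j, k) \in block n) = rows j && (maxn j k == n).
Proof.
rewrite mem_filter; apply: andb_idr => /andP [_ /eqP hn].
by apply/allpairsP; exists (j, k); rewrite !mem_iota /= in hn *; split => //; lia.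
Qed.

Lemma uniq_block n : uniq (block n).
Proof.
by rewrite filter_uniq // allpairs_uniq ?iota_uniq // => -[? ?] [? ?] _ _ [-> ->].
Qed.

Fixpoint interleave (w : nat -> nat -> nat) n : seq nat :=
  if n is m.+1 then interleave w m ++ min_encode [seq w q.1 q.2 | q <- block m]
  else [::].

Fixpoint interleave_size n : nat :=
  if n is m.+1 then interleave_size m + size (block m) else 0.

Lemma size_interleave w n : size (interleave w n) = interleave_size n.
Proof. by elim: n => //= n IH; rewrite size_cat IH size_min_encode size_map. Qed.

Lemma prefix_interleave w n m : n <= m -> prefix (interleave w n) (interleave w m).
Proof.
move=> /subnK <-; elim: (m - n) => [|t IH]; first exact: prefix_refl.
by rewrite addSn; apply: prefix_catl.
Qed.

Lemma eq_interleave w w' n :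
  (forall j k, rows j -> maxn j k < n -> w j k = w' j k) ->
  interleave w n = interleave w' n.
Proof.
elim: n => [|n IH] eqw //=; rewrite IH => [|j k rj hjk]; last by apply: eqw; lia.
congr (_ ++ min_encode _); apply/eq_in_map => -[j k].
by rewrite mem_block => /andP [rj /eqP hjk]; apply: eqw => //=; lia.
Qed.

Lemma interleave_inj w w' n : interleave w n = interleave w' n ->
  forall j k, rows j -> maxn j k < n -> w j k = w' j k.
Proof.
elim: n => [|n IH] //= eqww' j k rj hjk.
have /andP [/eqP eq_n /eqP eq_block] :
    (interleave w n == interleave w' n) &&
    (min_encode [seq w q.1 q.2 | q <- block n] ==
     min_encode [seq w' q.1 q.2 | q <- block n]).
  by rewrite -eqseq_cat ?eqww' // !size_interleave.
have [|hjk'] := ltnP (maxn j k) n; first exact: IH.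
have jk_block : (j, k) \in block n by rewrite mem_block rj; apply/eqP; lia.
by move/(can_inj min_encodeK)/eq_in_map: eq_block => /(_ _ jk_block).
Qed.

Variable j0 : nat.
Hypothesis rows_j0 : rows j0.

Lemma block_gt0 n : j0 <= n -> 0 < size (block n).
Proof.
move=> hn; have : (j0, n) \in block n by rewrite mem_block rows_j0; apply/eqP; lia.
by case: (block n).
Qed.

Lemma leq_interleave_size t : t <= interleave_size (j0 + t).
Proof.
elim: t => [|t IH] //; rewrite addnS /=.
by have := block_gt0 (leq_addr t j0); lia.
Qed.

(* Position i is settled at stage j0 + i.+1, as all stages from j0 on are
   nonempty. *)
Definition interleaving w i := nth 0 (interleave w (j0 + i.+1)) i.

Lemma interleave_mkseq w n :
  interleave w n = mkseq (interleaving w) (interleave_size n).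
Proof.
apply: (@eq_from_nth _ 0); first by rewrite size_interleave size_mkseq.
move=> i; rewrite size_interleave => hi; rewrite nth_mkseq // /interleaving.
have hi' : i < interleave_size (j0 + i.+1) by have := leq_interleave_size i.+1; lia.
have [hn|hn] := leqP n (j0 + i.+1).
  by rewrite (prefix_nth _ (prefix_interleave w hn)) ?size_interleave.
by rewrite [RHS](prefix_nth _ (prefix_interleave w (ltnW hn))) ?size_interleave.
Qed.

Lemma interleaving_min w n j : j0 <= n -> rows j -> j <= n ->
  interleaving w (interleave_size n) <= w j n.
Proof.
move=> hn rj hj; have hlt : interleave_size n < interleave_size n.+1.
  by rewrite /= -addn1 leq_add2l block_gt0.
rewrite -(nth_mkseq 0 (interleaving w) hlt) -interleave_mkseq /=.
rewrite nth_cat size_interleave ltnn subnn nth0; apply: head_min_encode.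
apply/mapP; exists (j, n) => //.
by rewrite mem_block rj; apply/eqP; lia.
Qed.

Lemma interleaving_surj (a : nat -> nat) : exists w, interleaving w =1 a.
Proof.
pose seg n := [seq a i | i <- iota (interleave_size n) (size (block n))].
pose w j k := nth 0 (min_decode (seg (maxn j k))) (index (j, k) (block (maxn j k))).
have block_w n : [seq w q.1 q.2 | q <- block n] = min_decode (seg n).
  rewrite -[RHS](map_nth_index 0 (uniq_block n)); last first.
    by rewrite size_min_decode size_map size_iota.
  apply/eq_in_map => -[j k]; rewrite mem_block => /andP [_ /eqP hn].
  by rewrite /w /= hn.
have interleave_w n : interleave w n = mkseq a (interleave_size n).
  elim: n => [|n IH] //=.
  by rewrite IH block_w min_decodeK /seg /mkseq iotaD map_cat.
exists w => i; rewrite /interleaving interleave_w nth_mkseq //.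
by have := leq_interleave_size i.+1; lia.
Qed.

End Interleaving.

Lemma node_cmpE (s t : seq nat) :
  (s = t \/ node_lt s t \/ node_lt t s) <-> (prefix s t \/ prefix t s).
Proof.
split=> [[->|[[st _]|[ts _]]]|]; [left; exact: prefix_refl|by left|by right|].
have [->|neq] := eqVneq s t; first by left.
by case=> h; right; [left|right]; split=> //; apply/eqP; rewrite // eq_sym.
Qed.

Lemma is_chainE (B : set (seq nat)) :
  is_chain B <-> forall s t, B s -> B t -> prefix s t \/ prefix t s.
Proof. by split=> chB s t Bs Bt; apply/node_cmpE; exact: chB. Qed.

Lemma prefix_mkseq (a : nat -> nat) n m : n <= m -> prefix (mkseq a n) (mkseq a m).
Proof. by move=> /subnKC <-; rewrite /mkseq iotaD map_cat prefix_prefix. Qed.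

Lemma prefix_mkseqP (a : nat -> nat) s m :
  prefix s (mkseq a m) -> s = mkseq a (size s).
Proof.
move=> sa; apply: (@eq_from_nth _ 0); rewrite ?size_mkseq // => i hi.
have hm : size s <= m by rewrite -[m](size_mkseq a) size_prefix.
by rewrite (prefix_nth _ sa hi) !nth_mkseq // (leq_trans hi hm).
Qed.

Lemma mkseq_eq_leq (f g : nat -> nat) m n :
  m <= n -> mkseq f n = mkseq g n -> mkseq f m = mkseq g m.
Proof.
move=> /subnKC <- /eqP; rewrite /mkseq iotaD !map_cat eqseq_cat ?size_map //.
by case/andP => /eqP.
Qed.

Lemma prefix_total (T : eqType) (s t u : seq T) :
  prefix s u -> prefix t u -> prefix s t \/ prefix t s.
Proof.
rewrite !prefixE => /eqP su /eqP tu.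
have [st|/ltnW ts] := leqP (size s) (size t); [left|right].
  by rewrite -tu take_takel // su.
by rewrite -su take_takel // tu.
Qed.

Definition branch_of (a : nat -> nat) : set (seq nat) :=
  [set s | s = mkseq a (size s)].

Lemma branch_of_mkseq a n : branch_of a (mkseq a n).
Proof. by rewrite /branch_of /= size_mkseq. Qed.

Lemma is_branch_of a : is_branch (branch_of a).
Proof.
split=> [|C /is_chainE chC subC].
  apply/is_chainE => s t -> ->.
  have [st|ts] := leqP (size s) (size t); [left|right]; apply: prefix_mkseq => //.
  exact: ltnW.
apply/seteqP; split=> // t Ct.
have [|] := chC _ _ Ct (subC _ (branch_of_mkseq a (size t).+1)).
  exact: prefix_mkseqP.
by move/size_prefix; rewrite size_mkseq ltnn.
Qed.

Section Branches.
Variable B : set (seq nat).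
Hypothesis brB : is_branch B.

Lemma branch_comparable u : (forall t, B t -> prefix u t \/ prefix t u) -> B u.
Proof.
have [/is_chainE chB maxB] := brB; move=> cmp_u.
suff <- : B `|` [set u] = B by right.
apply: maxB => [|s Bs]; last by left.
apply/is_chainE => s t [Bs|->] [Bt|->]; first exact: chB.
- by have [] := cmp_u s Bs; [right|left].
- exact: cmp_u.
- by left; exact: prefix_refl.
Qed.

Lemma branch_prefix s t : B s -> prefix t s -> B t.
Proof.
have [/is_chainE chB _] := brB; move=> Bs ts; apply: branch_comparable => u Bu.
have [su|us] := chB _ _ Bs Bu; first by left; exact: prefix_trans su.
exact: prefix_total ts us.
Qed.

Lemma branch_longer s : B s -> exists2 t, B t & size s < size t.
Proof.
have [/is_chainE chB _] := brB; move=> Bs; apply: contrapT => no_longer.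
suff Bs0 : B (rcons s 0) by apply: no_longer; exists (rcons s 0); rewrite ?size_rcons.
apply: branch_comparable => t Bt; have [st|ts] := chB _ _ Bs Bt; last first.
  by right; exact: prefix_trans ts (prefix_rcons s 0).
have ts : size t <= size s.
  by rewrite leqNgt; apply/negP => st'; apply: no_longer; exists t.
have -> : t = s by move: st; rewrite prefixE take_oversize // => /eqP.
by right; exact: prefix_rcons.
Qed.

Lemma branch_size n : exists s, B s /\ size s = n.
Proof.
elim: n => [|n [s [Bs <-]]].
  by exists [::]; split=> //; apply: branch_comparable => t _; left; exact: prefix0s.
have [t Bt st] := branch_longer Bs; exists (take (size s).+1 t).
by split; [exact: branch_prefix Bt (prefix_take _ _)|rewrite size_takel].
Qed.

Lemma is_branchP : exists a, B = branch_of a.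
Proof.
have [/is_chainE chB _] := brB.
pose a k := nth 0 (xget [::] [set s | B s /\ size s = k.+1]) k.
have Ba s : B s -> s = mkseq a (size s).
  move=> Bs; apply: (@eq_from_nth _ 0); rewrite ?size_mkseq // => i hi.
  rewrite nth_mkseq // /a; case: xgetP => [t _ [Bt ti]|]; last first.
    by have [t Bt] := branch_size i.+1; move/(_ t).
  have [st|ts] := chB _ _ Bs Bt; first exact: prefix_nth.
  by rewrite (prefix_nth _ ts) // ti.
exists a; apply/seteqP; split=> s; first exact: Ba.
move=> /= ->; have [t [Bt <-]] := branch_size (size s).
by rewrite -Ba.
Qed.

End Branches.

Lemma finite_nat_bounded (D : set nat) :
  finite_set D -> exists N, forall d, D d -> d < N.
Proof.
move=> /finite_fsetP [A ->]; exists (\max_(x <- finmap.enum_fset A) x).+1 => d /= dA.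
by rewrite ltnS; exact: (@leq_bigmax_seq _ _ xpredT id d dA).
Qed.

Lemma infinite_nat_unbounded (D : set nat) b :
  infinite_set D -> exists2 n, D n & b <= n.
Proof.
move=> Dinf; apply: contrapT => Db; apply/Dinf/(sub_finite_set _ (finite_II b)) => n Dn.
by rewrite /= ltnNge; apply/negP => bn; apply: Db; exists n.
Qed.

Lemma finite_eventually_uniform (I : Type) (J : set I) (Q : I -> nat -> Prop) :
  finite_set J -> (forall i, J i -> exists N, forall d, N <= d -> Q i d) ->
  exists N, forall i, J i -> forall d, N <= d -> Q i d.
Proof.
move=> Jfin evQ.
have /choice [N_ N_P] : forall i, exists N, J i -> forall d, N <= d -> Q i d.
  by move=> i; have [/evQ [N ?]|nJi] := pselect (J i); [exists N|exists 0].
have [N NP] := finite_nat_bounded (finite_image N_ Jfin).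
by exists N => i Ji d Nd; apply: N_P => //; apply/ltnW/(leq_trans (NP _ (imageP _ Ji))).
Qed.

Section Shoot.
Variables (T : Type) (F : foliage T).

Lemma gg_shoot_tail v (U : set T) : U !=set0 -> gg (shoot F v) [set U] ->
  exists N, forall d, N <= d -> F (rcons v d) `<=` U.
Proof.
move=> [u Uu] gg_vU.
have [|_ [C [Cv Cfin] <-] [_ CU]] := gg_vU U erefl.
  by move=> U0; rewrite U0 in Uu.
have [N NP] : exists N, forall d, ~ C (rcons v d) -> d < N.
  apply/finite_nat_bounded/(sub_finite_set _ (finite_preimage (f := rcons v) _ Cfin)).
    by move=> d nCd; split=> //; exists d.
  by move=> d1 d2 _ _; exact: rcons_injr.
exists N => d Nd x vdx; apply: CU; exists (rcons v d) => //.
by apply: contrapT => /NP; rewrite ltnNge Nd.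
Qed.

Lemma tail_gg_shoot v (U : set T) N : F (rcons v N) !=set0 ->
  (forall d, N <= d -> F (rcons v d) `<=` U) -> gg (shoot F v) [set U].
Proof.
move=> [y vNy] tailU _ -> _.
exists (\bigcup_(s in [set rcons v d | d in [set d | N <= d]]) F s).
  exists [set rcons v d | d in [set d | N <= d]] => //; split.
    by move=> _ [d _ <-]; exists d.
  apply: (sub_finite_set _ (finite_image (rcons v) (finite_II N))).
  move=> _ [[d _ <-] nNd]; exists d => //=; rewrite ltnNge; apply/negP => Nd.
  by apply: nNd; exists d.
split; last by move=> x [_ [d Nd <-]]; exact: tailU.
move/seteqP => [sub0 _]; apply: (sub0 y); exists (rcons v N) => //.
by exists N => /=.
Qed.

End Shoot.

(** * Addresses in a Baire foliage tree *)

Section BaireAddress.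
Variables (T : Type) (F : foliage T).
Hypotheses (F_ls : locally_strict F) (F_sb : strict_branches F).
Hypothesis F_root : F [::] = setT.

Lemma foliage_son s x : F s x -> exists d, F (rcons s d) x.
Proof. by have [-> _] := F_ls s; case=> _ [d _ <-]; exists d. Qed.

Lemma foliage_father s d x : F (rcons s d) x -> F s x.
Proof. by have [-> _] := F_ls s; exists (rcons s d) => //; exists d. Qed.

Lemma foliage_son_uniq s d d' x : F (rcons s d) x -> F (rcons s d') x -> d = d'.
Proof.
have [_ disj] := F_ls s; move=> xd xd'; apply: contrapT => neq.
have : (F (rcons s d) `&` F (rcons s d')) x by [].
by rewrite disj //; [exists d|exists d'|case/rcons_inj].
Qed.

Definition son_digit (x : T) (s : seq nat) : nat := xget 0 [set d | F (rcons s d) x].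

Lemma son_digitP s x : F s x -> F (rcons s (son_digit x s)) x.
Proof. by move/foliage_son/(xgetPex 0). Qed.

Fixpoint node (x : T) (n : nat) : seq nat :=
  if n is m.+1 then rcons (node x m) (son_digit x (node x m)) else [::].

Definition address (x : T) (k : nat) : nat := son_digit x (node x k).

Lemma node_address x n : node x n = mkseq (address x) n.
Proof. by elim: n => //= n IH; rewrite mkseqS -IH. Qed.

Lemma size_node x n : size (node x n) = n.
Proof. by rewrite node_address size_mkseq. Qed.

Lemma node_in x n : F (node x n) x.
Proof. by elim: n => [|n /son_digitP]; first by rewrite F_root. Qed.

Lemma leaf_node s x : F s x -> s = node x (size s).
Proof.
elim/last_ind: s => [//|s d IH] xd; have xs := foliage_father xd.
rewrite size_rcons /= -IH //; congr rcons; apply: (foliage_son_uniq xd).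
by have := node_in x (size s).+1; rewrite /= -IH.
Qed.

Lemma bigcap_branch_of_address x : \bigcap_(s in branch_of (address x)) F s = [set x].
Proof.
have [p pE] := F_sb (is_branch_of (address x)); rewrite pE; congr [set _].
have : (\bigcap_(s in branch_of (address x)) F s) x.
  by move=> s ->; rewrite -node_address; exact: node_in.
by rewrite pE.
Qed.

Lemma address_inj : injective address.
Proof.
move=> x y exy; have : [set x] y.
  by rewrite -bigcap_branch_of_address exy bigcap_branch_of_address.
by move=> ->.
Qed.

Lemma address_surj a : exists x, address x = a.
Proof.
have [p pE] := F_sb (is_branch_of a); exists p; apply/funext => k.
have /leaf_node : F (mkseq a k.+1) p.
  by have : [set p] p by []; rewrite -pE; apply; exact: branch_of_mkseq.
by rewrite size_mkseq node_address => /(congr1 (nth 0 ^~ k)); rewrite !nth_mkseq.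
Qed.

Lemma rise_node_tail p U n : U p -> rise F p U n ->
  exists N, forall d, N <= d -> F (rcons (node p n) d) `<=` U.
Proof.
move=> Up [v [pv ggv] <-]; rewrite -(leaf_node pv).
by apply: gg_shoot_tail ggv; exists p.
Qed.

End BaireAddress.

(** * The foliage tree of a coding *)

Section CodeFoliage.
Variables (T : Type) (c : T -> nat -> nat).
Hypotheses (c_inj : injective c) (c_surj : forall a, exists x, c x = a).

Definition code_foliage : foliage T := fun s => [set x | mkseq (c x) (size s) = s].

Lemma code_foliage_neq0 s : code_foliage s !=set0.
Proof.
have [x cx] := c_surj (nth 0 s); exists x.
by rewrite /code_foliage /= cx mkseq_nth.
Qed.

Lemma code_foliage_root : code_foliage [::] = setT.
Proof. by apply/seteqP; split. Qed.

Lemma code_foliage_locally_strict : locally_strict code_foliage.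
Proof.
move=> s; split.
  apply/seteqP; split=> [x xs|x [_ [d _ <-]]]; rewrite /code_foliage /=.
    exists (rcons s (c x (size s))); first by exists (c x (size s)).
    by rewrite /= size_rcons mkseqS xs.
  by rewrite size_rcons mkseqS => /rcons_inj [].
move=> _ _ [d _ <-] [d' _ <-] neq; apply/seteqP; split=> // x [].
by rewrite /code_foliage /= !size_rcons !mkseqS => xd xd'; apply: neq; rewrite -xd -xd'.
Qed.

Lemma code_foliage_strict_branches : strict_branches code_foliage.
Proof.
move=> B /is_branchP [a ->]; have [x <-] := c_surj a; exists x.
apply/seteqP; split=> [y ya|_ -> s s_eq]; last by rewrite /code_foliage /= -s_eq.
apply: c_inj; apply/funext => i; move: (ya _ (branch_of_mkseq (c x) i.+1)).
rewrite /code_foliage size_mkseq.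
by move/(congr1 (nth 0 ^~ i)); rewrite !nth_mkseq.
Qed.

End CodeFoliage.

Lemma filter_bigcap_finite (T I : Type) (F : set_system T) (J : set I)
    (f : I -> set T) : Filter F -> finite_set J ->
  (forall i, J i -> F (f i)) -> F (\bigcap_(i in J) f i).
Proof.
move=> FF Jfin Ff; rewrite -(@fset_setK {classic I} _ Jfin).
by apply: (@filter_bigI T {classic I}) => // i; rewrite in_fset_set // inE; exact: Ff.
Qed.

Section ProductBoxes.
Variables (L : Type) (X : L -> topologicalType).

Lemma nbhs_proj (f : prod_topology X) l (A : set (X l)) :
  nbhs (f l) A -> nbhs f [set g : prod_topology X | A (g l)].
Proof. exact: (@proj_continuous {classic L} X l f A). Qed.

Lemma nbhs_box (f : prod_topology X) (J : set L) (V : forall l, set (X l)) :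
  finite_set J -> (forall l, J l -> nbhs (f l) (V l)) ->
  nbhs f [set g : prod_topology X | forall l, J l -> V l (g l)].
Proof.
move=> Jfin fV; have := filter_bigcap_finite _ Jfin (fun l Jl => nbhs_proj (fV l Jl)).
by apply; exact: nbhs_filter.
Qed.

Definition box_nbhs (f : prod_topology X) : set_system (prod_topology X) :=
  [set U | exists J (V : forall l, set (X l)),
     [/\ finite_set J, forall l, nbhs (f l) (V l)
       & [set g | forall l, J l -> V l (g l)] `<=` U]].

Lemma box_nbhs_filter f : Filter (box_nbhs f).
Proof.
split.
- by exists set0, (fun=> setT); split=> // l; exact: filterT.
- move=> U1 U2 [J1 [V1 [J1fin fV1 VU1]]] [J2 [V2 [J2fin fV2 VU2]]].
  exists (J1 `|` J2), (fun l => V1 l `&` V2 l); split; first by rewrite finite_setU.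
    by move=> l; exact: filterI.
  move=> g gV; split; [apply: VU1|apply: VU2] => l Jl.
    by have [] := gV l (or_introl Jl).
  by have [] := gV l (or_intror Jl).
- by move=> U U' UU' [J [V [Jfin fV VU]]]; exists J, V; split=> // g /VU /UU'.
Qed.

Lemma nbhs_box_nbhs f U : nbhs f U -> box_nbhs f U.
Proof.
suff : box_nbhs f --> f by apply.
apply/(@cvg_sup _ _ _ _ f (box_nbhs_filter f)) => l A.
rewrite nbhsE => -[B [[C oC CB] Bf] BA].
pose V := @dfwith {classic L} (fun l => set (X l)) (fun l => setT) l C.
exists [set l], V; split.
- exact: finite_set1.
- move=> l'; rewrite /V.
  case: (@dfwithP {classic L} (fun l => set (X l)) (fun=> setT) l C l') => [|? _].
    by apply: open_nbhs_nbhs; split; rewrite -?CB in Bf.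
  exact: filterT.
- by move=> g /(_ l erefl); rewrite /V dfwithin => Cg; apply/BA; rewrite -CB.
Qed.

End ProductBoxes.

(** * The product tree *)

Section ProductCode.
Variables (Lambda : Type) (X : Lambda -> topologicalType) (H : forall l, foliage (X l)).
Arguments H : clear implicits.
Hypotheses (H_ls : forall l, locally_strict (H l))
  (H_sb : forall l, strict_branches (H l)) (H_root : forall l, H l [::] = setT).
Variables (rank : Lambda -> nat) (l0 : Lambda).
Hypothesis rank_inj : injective rank.
Hypothesis H_open : forall l, open_foliage (H l).

Definition unrank (j : nat) : option Lambda :=
  if pselect (exists l, rank l = j) is left ex then Some (projT1 (cid ex)) else None.

Lemma rankK l : unrank (rank l) = Some l.
Proof.
rewrite /unrank; case: pselect => [ex|]; last by case; exists l.
by congr Some; apply: rank_inj; exact: (projT2 (cid ex)).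
Qed.

Lemma unrankK j l : unrank j = Some l -> rank l = j.
Proof. by rewrite /unrank; case: pselect => // ex [<-]; exact: (projT2 (cid ex)). Qed.

Definition product_address (x : prod_topology X) (j k : nat) : nat :=
  if unrank j is Some l then address (H l) (x l) k else 0.

Lemma product_address_rank x l k : product_address x (rank l) k = address (H l) (x l) k.
Proof. by rewrite /product_address rankK. Qed.

Let ranked : pred nat := unrank.
Let ranked_l0 : ranked (rank l0). Proof. by rewrite /ranked rankK. Qed.

Definition product_code x := interleaving ranked (rank l0) (product_address x).

Lemma product_code_inj : injective product_code.
Proof.
move=> x y xy; apply: functional_extensionality_dep => l.
apply: (address_inj (H_ls l) (H_sb l) (H_root l)); apply/funext => k.
rewrite -!product_address_rank; apply: (@interleave_inj ranked _ _ (rank l + k).+1).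
- by rewrite !(interleave_mkseq ranked_l0) -/(product_code x) xy.
- by rewrite /ranked rankK.
- lia.
Qed.

Lemma product_code_surj a : exists x, product_code x = a.
Proof.
have [w wa] := interleaving_surj ranked_l0 a.
pose x : prod_topology X := fun l =>
  projT1 (cid (address_surj (H_ls l) (H_sb l) (H_root l) (w (rank l)))).
have xw l : address (H l) (x l) = w (rank l) by rewrite /x; case: cid.
exists x; apply/funext => i; rewrite -wa /product_code /interleaving; congr (nth 0 _ i).
apply: eq_interleave => j k; rewrite /ranked /product_address.
by case e: (unrank j) => [l|] // _ _; rewrite xw (unrankK e).
Qed.

Lemma product_code_prefixP x y n :
  mkseq (product_code x) (interleave_size ranked n) =
  mkseq (product_code y) (interleave_size ranked n) <->
  forall l, rank l < n -> node (H l) (x l) n = node (H l) (y l) n.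
Proof.
rewrite -!(interleave_mkseq ranked_l0); split=> [xy l ln|xy].
  rewrite !node_address; apply/eq_in_map => k; rewrite mem_iota => /= kn.
  rewrite -!product_address_rank; apply: (interleave_inj xy); last by lia.
  by rewrite /ranked rankK.
apply: eq_interleave => j k; rewrite /ranked /product_address.
case e: (unrank j) => [l|] // _; rewrite -(unrankK e) => lkn.
have /(congr1 (nth 0 ^~ k)) := xy l ltac:(lia).
by rewrite !node_address !nth_mkseq //; lia.
Qed.

Lemma product_code_min x l n : rank l0 <= n -> rank l <= n ->
  product_code x (interleave_size ranked n) <= address (H l) (x l) n.
Proof.
move=> l0n ln; rewrite -product_address_rank.
by apply: interleaving_min; rewrite // /ranked rankK.
Qed.

Definition product_foliage : foliage (prod_topology X) := code_foliage product_code.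

Lemma finite_rank_lt n : finite_set [set l | rank l < n].
Proof. by apply: (finite_preimage _ (finite_II n)) => ? ? _ _; exact: rank_inj. Qed.

Lemma product_foliage_open : open_foliage product_foliage.
Proof.
move=> s; rewrite openE => x xs; pose n := rank l0 + size s.
pose V l := H l (node (H l) (x l) n).
apply: filterS (nbhs_box (V := V) (finite_rank_lt n) _) => [y yV|l _].
  rewrite /product_foliage /code_foliage /= -[in RHS]xs.
  apply: (mkseq_eq_leq (leq_interleave_size ranked_l0 (size s))).
  apply/product_code_prefixP => l /yV /(leaf_node (H_ls l) (H_root l)).
  by rewrite size_node.
by apply: open_nbhs_nbhs; split; [exact: H_open|exact: node_in].
Qed.

Lemma product_foliage_son x y n d l : rank l0 <= n -> rank l < n ->
  product_foliage (rcons (mkseq (product_code x) (interleave_size ranked n)) d) y ->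
  exists2 e, d <= e & H l (rcons (node (H l) (x l) n) e) (y l).
Proof.
move=> l0n ln; rewrite /product_foliage /code_foliage /= size_rcons size_mkseq mkseqS.
case/rcons_inj => /product_code_prefixP yx <-.
exists (address (H l) (y l) n); first exact: product_code_min (ltnW ln).
by rewrite -yx //; exact: (node_in (H_ls l) (H_root l) (y l) n.+1).
Qed.

Hypothesis hrise : forall J : set Lambda, finite_set J -> J <> set0 ->
  forall R : Lambda -> set nat, (forall i, J i -> Rise (H i) (R i)) ->
  infinite_set (\bigcap_(i in J) R i).

Lemma product_foliage_grows : grows_into product_foliage.
Proof.
move=> p U /nbhs_box_nbhs [J0 [V [J0fin pV VU]]]; pose J := l0 |` J0.
have Jfin : finite_set J by rewrite finite_setU; split; [exact: finite_set1|].
have J_neq0 : J <> set0 by move/seteqP => [/(_ l0 (or_introl erefl))].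
have [b Jb] := finite_nat_bounded (finite_image rank Jfin).
have Rise_V l : Rise (H l) (rise (H l) (p l) (V l)) by exists (p l), (V l).
have [n Rn bn] :=
  infinite_nat_unbounded b (hrise Jfin J_neq0 (fun l _ => Rise_V l)).
have rank_lt_n l : J l -> rank l < n.
  by move=> Jl; apply: leq_trans bn; apply: Jb; exists l.
have [N NV] : exists N, forall l, J l -> forall d, N <= d ->
    H l (rcons (node (H l) (p l) n) d) `<=` V l.
  apply: finite_eventually_uniform Jfin _ => l Jl.
  exact/(rise_node_tail (H_ls l) (H_root l) (nbhs_singleton (pV l)) (Rn l Jl)).
exists (mkseq (product_code p) (interleave_size ranked n)).
  by rewrite /scope /product_foliage /code_foliage /= size_mkseq.
apply: (tail_gg_shoot (N := N)); first exact: code_foliage_neq0 product_code_surj _.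
move=> d Nd y yd; apply: VU => l J0l; have Jl : J l by right.
have l0n : rank l0 <= n by apply/ltnW/rank_lt_n; left.
have [e de ye] := product_foliage_son l0n (rank_lt_n l Jl) yd.
exact: NV l Jl e (leq_trans Nd de) _ ye.
Qed.

Lemma product_foliage_pi_tree : pi_tree product_foliage.
Proof.
split; [split; [|split; [|split]]|].
- exact: product_foliage_open.
- exact: code_foliage_locally_strict.
- exact: code_foliage_strict_branches product_code_inj product_code_surj.
- exact: code_foliage_root.
- exact: product_foliage_grows.
Qed.

End ProductCode.

Theorem theorem9 (Lambda : Type) (X : Lambda -> topologicalType)
  (H : forall l, foliage (X l))
  (hcount : countable [set: Lambda])
  (htwo : exists l1 l2 : Lambda, l1 <> l2)
  (hH : forall l, pi_tree (H l))
  (hrise : forall J : set Lambda, finite_set J -> J <> set0 ->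
     forall R : Lambda -> set nat,
       (forall i, J i -> Rise (H i) (R i)) ->
       infinite_set (\bigcap_(i in J) R i)) :
  has_pi_tree (prod_topology X).
Proof.
have /countable_injP [rank rank_inj] := hcount.
have {}rank_inj : injective rank by move=> l l' /rank_inj; apply; rewrite in_setT.
have [l0 _] := htwo. (* only the nonemptiness of Lambda is needed *)
have H_open l : open_foliage (H l) by have [[]] := hH l.
have H_ls l : locally_strict (H l) by have [[_ []]] := hH l.
have H_sb l : strict_branches (H l) by have [[_ [_ []]]] := hH l.
have H_root l : H l [::] = setT by have [[_ [_ []]]] := hH l.
exists (product_foliage H rank l0).
exact: product_foliage_pi_tree.
Qed.
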